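(* Let $\nu\in\mathcal{S}^{n-1}$, $\Pi_\nu(0):=\{x:-1\le x\cdot\nu\le0\}$, $\Gamma_N:=\{x\cdot\nu=0\}$, $\Gamma_D:=\{x\cdot\nu=-1\}$, and for $x\in\mathbb{R}^n$ write $x'=x-(x\cdot\nu)\nu$. Let $R,\varepsilon>0$ and $\Sigma_R:=\Pi_\nu(0)\cap\{|x'|\le R\}$. Suppose $\omega$ satisfies in the viscosity sense: (a) $-\mathcal{P}^+(D^2\omega)\le0$ and $-\mathcal{P}^-(D^2\omega)\ge0$ in $\Sigma_R$; (b) $\partial\omega/\partial\nu=0$ on $\Gamma_N\cap\Sigma_R$; (c) $\omega=0$ on $\Gamma_D\cap\Sigma_R$; (d) $|\omega|\le R^{2-\varepsilon}$. Then $|\omega|\le CR^{-\varepsilon}$ in $\Pi_\nu(0)\cap\{|x'|\le1\}$, where $C>0$ is a constant depending only on $n,\lambda,\Lambda$.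
   Context: Fix $0<\lambda<\Lambda$. For a real symmetric matrix $M$ with eigenvalues $e_i$, $\mathcal{P}^+(M)=\Lambda\sum_{e_i>0}e_i+\lambda\sum_{e_i<0}e_i$ and $\mathcal{P}^-(M)=\lambda\sum_{e_i>0}e_i+\Lambda\sum_{e_i<0}e_i$ (Pucci extremal operators). *)

From HB Require Import structures.
From mathcomp Require Import all_boot all_order all_algebra.
From mathcomp Require Import all_classical all_reals all_analysis.
Set Implicit Arguments. Unset Strict Implicit. Unset Printing Implicit Defensive.
Import Order.TTheory GRing.Theory Num.Theory.
Import numFieldNormedType.Exports.
Local Open Scope classical_set_scope.
Local Open Scope ring_scope.

Section Defs.
Variables (R : realType) (n : nat).

Definition dotv (x y : 'rV[R]_n) : R := \sum_(i < n) x 0 i * y 0 i.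
Definition enorm (x : 'rV[R]_n) : R := Num.sqrt (dotv x x).

Definition tang (nu x : 'rV[R]_n) : 'rV[R]_n := x - (dotv x nu) *: nu.

Definition slab (nu : 'rV[R]_n) : set 'rV[R]_n :=
  [set x | -1 <= dotv x nu <= 0].

Definition SigmaR (nu : 'rV[R]_n) (Rr : R) : set 'rV[R]_n :=
  [set x | slab nu x /\ enorm (tang nu x) <= Rr].

(* eigenvalues (with multiplicity) of a square matrix: a list s with
   char_poly M = prod_(e <- s) (X - e), when it exists (always for real
   symmetric M); the Pucci operators are invariant under reordering of s. *)
Definition eigs (M : 'M[R]_n) : seq R :=
  match pselect (exists s : seq R, char_poly M = \prod_(e <- s) ('X - e%:P)) with
  | left h => projT1 (cid h)
  | right _ => [::]
  end.

Definition pucci_plus (lam Lam : R) (M : 'M[R]_n) : R :=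
  Lam * (\sum_(e <- eigs M | 0 < e) e) + lam * (\sum_(e <- eigs M | e < 0) e).
Definition pucci_minus (lam Lam : R) (M : 'M[R]_n) : R :=
  lam * (\sum_(e <- eigs M | 0 < e) e) + Lam * (\sum_(e <- eigs M | e < 0) e).

Definition evec (i : 'I_n) : 'rV[R]_n := delta_mx 0 i.

Definition dirder (f : 'rV[R]_n -> R) (v x : 'rV[R]_n) : R :=
  derive1 (fun t : R => f (x + t *: v)) 0.

Definition pderiv (i : 'I_n) (f : 'rV[R]_n -> R) : 'rV[R]_n -> R :=
  fun x => dirder f (evec i) x.

Definition C2 (f : 'rV[R]_n -> R) : Prop :=
  continuous f /\
  (forall i x, derivable (fun t : R => f (x + t *: evec i)) 0 1) /\
  (forall i, continuous (pderiv i f)) /\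
  (forall i j x, derivable (fun t : R => pderiv j f (x + t *: evec i)) 0 1) /\
  (forall i j, continuous (pderiv i (pderiv j f))).

Definition hessian (f : 'rV[R]_n -> R) (x : 'rV[R]_n) : 'M[R]_n :=
  \matrix_(i, j) pderiv i (pderiv j f) x.

Definition touch_above (D : set 'rV[R]_n) (u phi : 'rV[R]_n -> R) x0 : Prop :=
  exists2 r : R, 0 < r & forall y, D y -> enorm (y - x0) < r ->
    u y - phi y <= u x0 - phi x0.
Definition touch_below (D : set 'rV[R]_n) (u phi : 'rV[R]_n -> R) x0 : Prop :=
  exists2 r : R, 0 < r & forall y, D y -> enorm (y - x0) < r ->
    u y - phi y >= u x0 - phi x0.

Definition interiorSigma (nu : 'rV[R]_n) (Rr : R) (x : 'rV[R]_n) : Prop :=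
  -1 < dotv x nu < 0 /\ enorm (tang nu x) < Rr.
Definition neumannPart (nu : 'rV[R]_n) (Rr : R) (x : 'rV[R]_n) : Prop :=
  dotv x nu = 0 /\ enorm (tang nu x) < Rr.

(* (a)+(b): viscosity subsolution of -P^+(D^2 w) = 0 in Sigma_R with
   d w / d nu = 0 on Gamma_N (generalized boundary condition) *)
Definition visc_sub_Pplus (lam Lam : R) (nu : 'rV[R]_n) (Rr : R)
    (w : 'rV[R]_n -> R) : Prop :=
  forall (phi : 'rV[R]_n -> R) (x0 : 'rV[R]_n), C2 phi ->
    touch_above (SigmaR nu Rr) w phi x0 ->
    (interiorSigma nu Rr x0 -> - pucci_plus lam Lam (hessian phi x0) <= 0) /\
    (neumannPart nu Rr x0 ->
       Num.min (- pucci_plus lam Lam (hessian phi x0)) (dirder phi nu x0) <= 0).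

(* (a)+(b): viscosity supersolution of -P^-(D^2 w) = 0 in Sigma_R with
   d w / d nu = 0 on Gamma_N *)
Definition visc_super_Pminus (lam Lam : R) (nu : 'rV[R]_n) (Rr : R)
    (w : 'rV[R]_n -> R) : Prop :=
  forall (phi : 'rV[R]_n -> R) (x0 : 'rV[R]_n), C2 phi ->
    touch_below (SigmaR nu Rr) w phi x0 ->
    (interiorSigma nu Rr x0 -> - pucci_minus lam Lam (hessian phi x0) >= 0) /\
    (neumannPart nu Rr x0 ->
       Num.max (- pucci_minus lam Lam (hessian phi x0)) (dirder phi nu x0) >= 0).

End Defs.

From HB Require Import structures.
From mathcomp Require Import all_boot all_order all_algebra.
From mathcomp Require Import all_classical all_reals all_analysis.
From mathcomp Require Import ring lra.
Set Implicit Arguments. Unset Strict Implicit. Unset Printing Implicit Defensive.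
Import Order.TTheory GRing.Theory Num.Theory.
Import numFieldNormedType.Exports.
Local Open Scope classical_set_scope.
Local Open Scope ring_scope.

(* The barrier psi_r(x) = r (|x|^2 - K (x.nu)^2 + 2 x.nu + K + 2), with
   K = 2 + n Lam / lam and r = R^-eps, has Hessian 2r (I - K nu nu^T), whose
   eigenvalues are 2r (n - 1 times) and 2r (1 - K); hence
   P^+(D^2 psi_r) = -2r (lam + Lam) < 0, and its normal derivative on Gamma_N is
   2r > 0.  On Sigma_R it dominates r |x|^2, so psi_r >= 0 = w on Gamma_D and
   psi_r >= r R^2 = R^(2-eps) >= |w| where |x'| = R.  At a maximum point of
   w - psi_r over the compact set Sigma_R lying elsewhere, psi_r is itself an
   admissible test function and these strict inequalities contradict the
   subsolution property; so w <= psi_r.  Symmetrically -psi_r = psi_(-r) <= w,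
   and psi_r <= (K + 4) r where |x'| <= 1. *)

Section PointwiseContinuity.
Variables (T : topologicalType) (R : numFieldType).
Implicit Types f g : T -> R.

Lemma continuous_add f g : continuous f -> continuous g -> continuous (fun x => f x + g x).
Proof. by move=> cf cg x; apply: continuousD; [exact: cf | exact: cg]. Qed.

Lemma continuous_mul f g : continuous f -> continuous g -> continuous (fun x => f x * g x).
Proof. by move=> cf cg x; apply: continuousM; [exact: cf | exact: cg]. Qed.

Lemma continuous_sum (I : Type) (r : seq I) (F : I -> T -> R) :
  (forall i, continuous (F i)) -> continuous (fun x => \sum_(i <- r) F i x).
Proof.
move=> cF; elim: r => [|i r IH].
  under eq_fun do rewrite big_nil; exact: cst_continuous.
by under eq_fun do rewrite big_cons; exact: continuous_add.
Qed.

End PointwiseContinuity.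

Lemma sumr_nseq (R : nmodType) (k : nat) (a : R) (P : pred R) :
  \sum_(e <- nseq k a | P e) e = if P a then a *+ k else 0.
Proof.
rewrite big_nseq_cond; case: (P a) => //.
by elim: k => [|k IH] //; rewrite mulrS -IH; case: k {IH}.
Qed.

(* Multiplied by c so that c need not be invertible: both sides are the
   determinant of [[1, v], [u^T, c]] times c, computed by eliminating from
   below and from above. *)
Lemma det_scalar_sub_rank1 (R : comRingType) (n : nat) (c : R) (u v : 'rV[R]_n) :
  \det (c%:M - u^T *m v) * c = (c - (v *m u^T) 0 0) * c ^+ n.
Proof.
pose L := block_mx (c%:M : 'M[R]_1) (- v) 0 (1%:M : 'M[R]_n).
pose K := block_mx (1%:M : 'M[R]_1) v u^T (c%:M : 'M[R]_n).
pose K' := block_mx (1%:M : 'M[R]_1) 0 (- u^T) (1%:M : 'M[R]_n).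
have K'K : K' *m K = block_mx 1%:M v 0 (c%:M - u^T *m v).
  rewrite /K' /K mulmx_block !mul_scalar_mx !scale1r mul0mx !addr0.
  by rewrite mul0mx addr0 mulmx1 addNr mulNmx addrC.
have LK : L *m K = block_mx (c%:M - v *m u^T) 0 u^T c%:M.
  rewrite /L /K mulmx_block !mul_scalar_mx !mul_mx_scalar mulNmx !scale1r.
  by rewrite scalemx1 scalerN subrr mul0mx !add0r.
have := congr1 determinant LK; rewrite det_mulmx det_ublock det_lblock det1.
have := congr1 determinant K'K; rewrite det_mulmx det_lblock det_ublock !det1.
rewrite !mul1r => <-; rewrite mulr1 det_scalar1 det_scalar mulrC => ->.
by rewrite det_mx11 !mxE eqxx.
Qed.

Lemma char_poly_rank1 (F : idomainType) (n : nat) (u : 'rV[F]_n) (a b : F) :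
  (0 < n)%N -> u *m u^T = 1 ->
  char_poly (a%:M + b *: (u^T *m u)) = ('X - (a + b)%:P) * ('X - a%:P) ^+ n.-1.
Proof.
move=> n_gt0 uu; set P := 'X - a%:P; set v := map_mx polyC u.
have vv : ((b%:P *: v) *m v^T) 0 0 = b%:P.
  rewrite -scalemxAl /v map_trmx -map_mxM uu map_mx1 !mxE.
  by rewrite eqxx mulr1.
have E : char_poly_mx (a%:M + b *: (u^T *m u)) = P%:M - v^T *m (b%:P *: v).
  apply/matrixP => i j; rewrite !mxE big_ord1 !mxE big_ord1 !mxE.
  by rewrite /P; case: (i == j); rewrite /= ?mulr1n ?mulr0n ?rmorphD ?rmorphM /=; ring.
apply: (mulIf (negbT (polyXsubC_eq0 a))).
rewrite /char_poly E det_scalar_sub_rank1 vv -mulrA -exprSr prednK //.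
by rewrite /P rmorphD /=; congr (_ * _); ring.
Qed.

Lemma derive1_quadratic0 (R : realType) (p q r : R) :
  derivable (fun s : R => p + q * s + r * s ^+ 2) 0 1 /\
  derive1 (fun s : R => p + q * s + r * s ^+ 2) 0 = q.
Proof.
have D : is_derive (0 : R) (1 : R) (fun s : R => p + q * s + r * s ^+ 2) q.
  apply: is_derive_eq.
  by rewrite /= !scale0r addr0 scaler0 addr0 add0r mul1r /GRing.scale /= mulr1.
by split; [case: D | rewrite derive1E; exact: derive_val].
Qed.

Section InnerProduct.
Variables (R : realType) (n : nat).
Implicit Types (x y z nu : 'rV[R]_n).

Lemma dotvC x y : dotv x y = dotv y x.
Proof. by apply: eq_bigr => i _; rewrite mulrC. Qed.

Lemma dotvDl x y z : dotv (x + y) z = dotv x z + dotv y z.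
Proof. by rewrite /dotv -big_split; apply: eq_bigr => i _; rewrite mxE mulrDl. Qed.

Lemma dotvZl (c : R) x z : dotv (c *: x) z = c * dotv x z.
Proof. by rewrite /dotv mulr_sumr; apply: eq_bigr => i _; rewrite mxE mulrA. Qed.

Lemma dotvBl x y z : dotv (x - y) z = dotv x z - dotv y z.
Proof. by rewrite dotvDl -scaleN1r dotvZl mulN1r. Qed.

Lemma dotvDr x y z : dotv z (x + y) = dotv z x + dotv z y.
Proof. by rewrite dotvC dotvDl !(dotvC z). Qed.

Lemma dotvZr (c : R) x z : dotv z (c *: x) = c * dotv z x.
Proof. by rewrite dotvC dotvZl (dotvC z). Qed.

Lemma dotvBr x y z : dotv z (x - y) = dotv z x - dotv z y.
Proof. by rewrite dotvC dotvBl !(dotvC z). Qed.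

Lemma dotv_ge0 x : 0 <= dotv x x.
Proof. by apply: sumr_ge0 => i _; rewrite -expr2 sqr_ge0. Qed.

Lemma dotv_evecl (i : 'I_n) x : dotv (evec R i) x = x 0 i.
Proof.
rewrite /dotv (bigD1 i) //= big1 ?addr0; first by rewrite mxE !eqxx mul1r.
by move=> j ji; rewrite mxE (negbTE ji) andbF mul0r.
Qed.

Lemma mulmx_trmx x : x *m x^T = (dotv x x)%:M.
Proof.
apply/matrixP => i j; rewrite !mxE !ord1 eqxx mulr1n.
by apply: eq_bigr => k _; rewrite mxE.
Qed.

Lemma sqr_coord_le_dotv x i : x 0 i ^+ 2 <= dotv x x.
Proof.
rewrite /dotv (bigD1 i) //= expr2 lerDl.
by apply: sumr_ge0 => j _; rewrite -expr2 sqr_ge0.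
Qed.

Lemma continuous_dotvl y : continuous (fun x => dotv x y).
Proof.
apply: continuous_sum => i.
by apply: continuous_mul; [exact: coord_continuous | exact: cst_continuous].
Qed.

Lemma continuous_dotvv : continuous (fun x => dotv x x).
Proof.
by apply: continuous_sum => i; apply: continuous_mul; exact: coord_continuous.
Qed.

Lemma enorm_ge0 x : 0 <= enorm x.
Proof. exact: sqrtr_ge0. Qed.

Lemma sqr_enorm x : enorm x ^+ 2 = dotv x x.
Proof. by rewrite sqr_sqrtr // dotv_ge0. Qed.

Lemma sqr_enorm_tang nu y : dotv nu nu = 1 ->
  enorm (tang nu y) ^+ 2 = dotv y y - dotv y nu ^+ 2.
Proof.
move=> nu1; rewrite sqr_enorm /tang dotvBl !dotvBr !dotvZl !dotvZr nu1.
by rewrite (dotvC nu y); ring.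
Qed.

End InnerProduct.

Section RankOnePucci.
Variables (R : realType) (n : nat).

Lemma eigs_perm_eq (M : 'M[R]_n) (s : seq R) :
  char_poly M = \prod_(e <- s) ('X - e%:P) -> perm_eq (eigs M) s.
Proof.
move=> cpM; apply: prod_XsubC_eq; rewrite -cpM /eigs.
case: pselect => [h|[]]; last by exists s.
by case: (cid h) => s' /= ->.
Qed.

Lemma dim_gt0_unit {nu : 'rV[R]_n} : dotv nu nu = 1 -> (0 < n)%N.
Proof.
case: n nu => // nu; rewrite /dotv big_ord0 => /eqP.
by rewrite eq_sym oner_eq0.
Qed.

Lemma eigs_rank1 (nu : 'rV[R]_n) (a b : R) : dotv nu nu = 1 ->
  perm_eq (eigs (a%:M + b *: (nu^T *m nu))) ((a + b) :: nseq n.-1 a).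
Proof.
move=> nu1; apply: eigs_perm_eq.
rewrite (char_poly_rank1 a b (dim_gt0_unit nu1)) ?mulmx_trmx ?nu1 //.
rewrite big_cons; congr (_ * _).
by elim: n.-1 => [|k IH]; rewrite ?big_nil // big_cons -IH exprS.
Qed.

Variables (lam Lam : R) (nu : 'rV[R]_n).
Hypothesis nu1 : dotv nu nu = 1.

Lemma pucci_plus_rank1 (a b : R) : 0 < a -> a + b < 0 ->
  pucci_plus lam Lam (a%:M + b *: (nu^T *m nu)) = Lam * (a *+ n.-1) + lam * (a + b).
Proof.
move=> a_gt0 ab_lt0; rewrite /pucci_plus !(perm_big _ (eigs_rank1 a b nu1)).
by rewrite !big_cons !sumr_nseq a_gt0 ab_lt0 (lt_gtF a_gt0) (lt_gtF ab_lt0) /= addr0.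
Qed.

Lemma pucci_minus_rank1 (a b : R) : a < 0 -> 0 < a + b ->
  pucci_minus lam Lam (a%:M + b *: (nu^T *m nu)) = lam * (a + b) + Lam * (a *+ n.-1).
Proof.
move=> a_lt0 ab_gt0; rewrite /pucci_minus !(perm_big _ (eigs_rank1 a b nu1)).
by rewrite !big_cons !sumr_nseq a_lt0 ab_gt0 (lt_gtF a_lt0) (lt_gtF ab_gt0) /= addr0.
Qed.

End RankOnePucci.

Section QuadraticBarrier.
Variables (R : realType) (n : nat) (nu : 'rV[R]_n) (al be ga de : R).
Implicit Types (x v w : 'rV[R]_n).

Definition qbarrier x := al * dotv x x + be * dotv x nu ^+ 2 + ga * dotv x nu + de.

Definition qbarrier_grad x v :=
  2 * al * dotv x v + 2 * be * dotv x nu * dotv v nu + ga * dotv v nu.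

Lemma qbarrier_line x v : (fun s : R => qbarrier (x + s *: v)) =
  (fun s => qbarrier x + qbarrier_grad x v * s + (al * dotv v v + be * dotv v nu ^+ 2) * s ^+ 2).
Proof.
apply: funext => s; rewrite /qbarrier /qbarrier_grad.
by rewrite !dotvDl !dotvDr !dotvZl !dotvZr (dotvC v x); ring.
Qed.

(* The vanishing quadratic term puts it in the shape of [derive1_quadratic0]. *)
Lemma qbarrier_grad_line w x v : (fun s : R => qbarrier_grad (x + s *: w) v) =
  (fun s => qbarrier_grad x v + (2 * al * dotv w v + 2 * be * dotv w nu * dotv v nu) * s
            + 0 * s ^+ 2).
Proof. by apply: funext => s; rewrite /qbarrier_grad !dotvDl !dotvZl; ring. Qed.

Lemma derivable_qbarrier x v : derivable (fun s : R => qbarrier (x + s *: v)) 0 1.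
Proof. by rewrite qbarrier_line; exact: (proj1 (derive1_quadratic0 _ _ _)). Qed.

Lemma dirder_qbarrier x v : dirder qbarrier v x = qbarrier_grad x v.
Proof. by rewrite /dirder qbarrier_line; exact: (proj2 (derive1_quadratic0 _ _ _)). Qed.

Lemma pderiv_qbarrier i : pderiv i qbarrier = qbarrier_grad^~ (evec R i).
Proof. by apply: funext => x; rewrite /pderiv dirder_qbarrier. Qed.

Lemma pderiv2_qbarrier i j x :
  pderiv i (pderiv j qbarrier) x = 2 * al * (i == j)%:R + 2 * be * nu 0 i * nu 0 j.
Proof.
rewrite pderiv_qbarrier /pderiv /dirder qbarrier_grad_line.
rewrite (proj2 (derive1_quadratic0 _ _ _)) !dotv_evecl.
by rewrite mxE eqxx /= eq_sym.
Qed.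

Lemma continuous_qbarrier : continuous qbarrier.
Proof.
rewrite /qbarrier; repeat (apply: continuous_add || apply: continuous_mul);
  first [exact: cst_continuous | exact: continuous_dotvl | exact: continuous_dotvv].
Qed.

Lemma continuous_qbarrier_grad v : continuous (qbarrier_grad^~ v).
Proof.
rewrite /qbarrier_grad; repeat (apply: continuous_add || apply: continuous_mul);
  first [exact: cst_continuous | exact: continuous_dotvl].
Qed.

Lemma C2_qbarrier : C2 qbarrier.
Proof.
split; first exact: continuous_qbarrier.
split; first by move=> i x; exact: derivable_qbarrier.
split; first by move=> i; rewrite pderiv_qbarrier; exact: continuous_qbarrier_grad.
split.
  move=> i j x; rewrite pderiv_qbarrier qbarrier_grad_line.
  exact: (proj1 (derive1_quadratic0 _ _ _)).
move=> i j; rewrite (_ : pderiv i _ = fun=> 2 * al * (i == j)%:R + 2 * be * nu 0 i * nu 0 j).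
  exact: cst_continuous.
by apply: funext => x; rewrite pderiv2_qbarrier.
Qed.

Lemma hessian_qbarrier x : hessian qbarrier x = (2 * al)%:M + (2 * be) *: (nu^T *m nu).
Proof.
apply/matrixP => i j; rewrite !mxE pderiv2_qbarrier big_ord1 !mxE.
by rewrite mulrnAr mulrA mulr1.
Qed.

End QuadraticBarrier.

Section Slab.
Variables (R : realType) (n : nat).
Implicit Types (nu x y : 'rV[R]_n) (Rr : R).

Lemma bounded_set_coord (A : set 'rV[R]_n) (K : R) :
  0 <= K -> (forall y, A y -> forall i, `|y 0 i| <= K) -> bounded_set A.
Proof.
move=> K_ge0 AK; exists K; split; first by rewrite ger0_real.
move=> N KN y Ay; rewrite /= [`|y|]mx_normrE.
apply: bigmax_le => [|[i j] _] /=; first by rewrite (le_trans K_ge0) // ltW.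
by rewrite ord1 (le_trans (AK y Ay j)) // ltW.
Qed.

Lemma continuous_enorm_tang nu : dotv nu nu = 1 -> continuous (fun x => enorm (tang nu x)).
Proof.
move=> nu1; rewrite (_ : (fun x => _) = fun x => Num.sqrt (dotv x x - dotv x nu ^+ 2)).
  have cf : continuous (fun x => dotv x x - dotv x nu ^+ 2).
    apply: (continuous_add (@continuous_dotvv _ _)) => y.
    apply: (@continuousN _ _ _ (fun y => dotv y nu ^+ 2)).
    by apply: continuous_mul; exact: continuous_dotvl.
  by move=> x; exact: (continuous_comp (cf x) (@sqrt_continuous _ _)).
apply: funext => x; rewrite -sqr_enorm_tang // sqrtr_sqr ger0_norm //.
exact: enorm_ge0.
Qed.

Lemma compact_SigmaR nu Rr : dotv nu nu = 1 -> compact (SigmaR nu Rr).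
Proof.
move=> nu1; apply: bounded_closed_compact.
  apply: (@bounded_set_coord _ (Rr ^+ 2 + 2)) => [|y [/andP[t1 t2] eR] i].
    by rewrite addr_ge0 ?sqr_ge0.
  have := sqr_coord_le_dotv y i; have := sqr_enorm_tang y nu1.
  rewrite -(real_normK (num_real (y 0 i))).
  have := enorm_ge0 (tang nu y); have := normr_ge0 (y 0 i).
  move: (`|y 0 i|) (enorm (tang nu y)) eR => a e eR a_ge0 e_ge0 eE aE.
  have : e ^+ 2 <= Rr ^+ 2 by nra.
  nra.
rewrite (_ : SigmaR nu Rr = (fun x => dotv x nu) @^-1` `[-1, 0]
    `&` (fun x => enorm (tang nu x)) @^-1` [set t | t <= Rr]).
  apply: closedI; apply: closed_comp => [x _|].
  - exact: continuous_dotvl.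
  - exact: interval_closed.
  - exact: continuous_enorm_tang.
  - exact: closed_le.
by apply/seteqP; split => x /=; rewrite in_itv.
Qed.

Lemma SigmaR_cases nu Rr x : SigmaR nu Rr x ->
  [\/ dotv x nu = -1, enorm (tang nu x) = Rr, neumannPart nu Rr x | interiorSigma nu Rr x].
Proof.
case=> /andP[t1 t2] eR.
have [tD|tD] := eqVneq (dotv x nu) (-1); first by constructor 1.
have [eRr|eRr] := eqVneq (enorm (tang nu x)) Rr; first by constructor 2.
have elt : enorm (tang nu x) < Rr by rewrite lt_neqAle eRr eR.
have [t0|t0] := eqVneq (dotv x nu) 0; first by constructor 3.
by constructor 4; split=> //; rewrite !lt_neqAle eq_sym tD t0 t1 t2.
Qed.

End Slab.

Section Comparison.
Variables (R : realType) (n : nat) (lam Lam : R) (nu : 'rV[R]_n) (Rr : R).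
Variables (w phi : 'rV[R]_n -> R).
Hypotheses (nu1 : dotv nu nu = 1) (wC : {within SigmaR nu Rr, continuous w}) (phiC2 : C2 phi).

Let continuous_w_sub_phi : {within SigmaR nu Rr, continuous (fun y => w y - phi y)}.
Proof. by apply: within_continuousB => //; apply: continuous_subspaceT; case: phiC2. Qed.

Lemma visc_sub_le_strict_super :
  visc_sub_Pplus lam Lam nu Rr w ->
  (forall x, SigmaR nu Rr x -> pucci_plus lam Lam (hessian phi x) < 0) ->
  (forall x, neumannPart nu Rr x -> 0 < dirder phi nu x) ->
  (forall x, SigmaR nu Rr x -> dotv x nu = -1 \/ enorm (tang nu x) = Rr -> w x <= phi x) ->
  forall x, SigmaR nu Rr x -> w x <= phi x.
Proof.
move=> wsub Pphi_lt0 dphi_gt0 w_le_phi x Sx; rewrite -subr_le0.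
have S0 : SigmaR nu Rr !=set0 by exists x.
have [c /[!inE] Sc cmax] := EVT_max_rV S0 (compact_SigmaR nu1) continuous_w_sub_phi.
apply: le_trans (cmax x _) _; first by rewrite inE.
have touch : touch_above (SigmaR nu Rr) w phi c.
  by exists 1 => // y Sy _; apply: cmax; rewrite inE.
have [wI wN] := wsub phi c phiC2 touch.
have := Pphi_lt0 c Sc.
case: (SigmaR_cases Sc) => [cD|cL|cN|cI] P_lt0.
- by rewrite subr_le0 w_le_phi //; left.
- by rewrite subr_le0 w_le_phi //; right.
- by move: (wN cN) (dphi_gt0 c cN); rewrite ge_min => /orP[]; lra.
- by move: (wI cI); lra.
Qed.

Lemma visc_super_ge_strict_sub :
  visc_super_Pminus lam Lam nu Rr w ->
  (forall x, SigmaR nu Rr x -> 0 < pucci_minus lam Lam (hessian phi x)) ->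
  (forall x, neumannPart nu Rr x -> dirder phi nu x < 0) ->
  (forall x, SigmaR nu Rr x -> dotv x nu = -1 \/ enorm (tang nu x) = Rr -> phi x <= w x) ->
  forall x, SigmaR nu Rr x -> phi x <= w x.
Proof.
move=> wsup Pphi_gt0 dphi_lt0 phi_le_w x Sx; rewrite -subr_ge0.
have S0 : SigmaR nu Rr !=set0 by exists x.
have [c /[!inE] Sc cmin] := EVT_min_rV S0 (compact_SigmaR nu1) continuous_w_sub_phi.
apply: le_trans _ (cmin x _); last by rewrite inE.
have touch : touch_below (SigmaR nu Rr) w phi c.
  by exists 1 => // y Sy _; apply: cmin; rewrite inE.
have [wI wN] := wsup phi c phiC2 touch.
have := Pphi_gt0 c Sc.
case: (SigmaR_cases Sc) => [cD|cL|cN|cI] P_gt0.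
- by rewrite subr_ge0 phi_le_w //; left.
- by rewrite subr_ge0 phi_le_w //; right.
- by move: (wN cN) (dphi_lt0 c cN); rewrite le_max => /orP[]; lra.
- by move: (wI cI); lra.
Qed.

End Comparison.

Section Barrier.
Variables (R : realType) (n : nat) (lam Lam : R) (nu : 'rV[R]_n).
Hypotheses (lam_gt0 : 0 < lam) (Lam_ge0 : 0 <= Lam) (nu1 : dotv nu nu = 1).

Definition barrier_coef := 2 + n%:R * Lam / lam.

Definition barrier (r : R) :=
  qbarrier nu r (- (barrier_coef * r)) (2 * r) ((barrier_coef + 2) * r).

Lemma barrier_coef_ge2 : 2 <= barrier_coef.
Proof. by rewrite lerDl divr_ge0 ?mulr_ge0 ?ler0n // ltW. Qed.

Lemma barrierN r x : barrier (- r) x = - barrier r x.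
Proof. by rewrite /barrier /qbarrier; ring. Qed.

Lemma hessian_barrier r x :
  hessian (barrier r) x = (2 * r)%:M + (- (2 * barrier_coef * r)) *: (nu^T *m nu).
Proof. by rewrite /barrier hessian_qbarrier mulrN mulrA. Qed.

Lemma C2_barrier r : C2 (barrier r).
Proof. exact: C2_qbarrier. Qed.

Let natr_pred : n%:R = n.-1%:R + 1 :> R.
Proof. by rewrite natr1 prednK // (dim_gt0_unit nu1). Qed.

Lemma pucci_plus_hessian_barrier r x : 0 < r ->
  pucci_plus lam Lam (hessian (barrier r) x) = - (2 * r * (lam + Lam)).
Proof.
move=> r_gt0; have K2 := barrier_coef_ge2.
rewrite hessian_barrier pucci_plus_rank1 //; last by nra.
  by rewrite -mulr_natr /barrier_coef natr_pred; field; rewrite gt_eqF.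
by rewrite mulr_gt0.
Qed.

Lemma pucci_minus_hessian_barrier r x : r < 0 ->
  pucci_minus lam Lam (hessian (barrier r) x) = - (2 * r * (lam + Lam)).
Proof.
move=> r_lt0; have K2 := barrier_coef_ge2.
rewrite hessian_barrier pucci_minus_rank1 //; last by nra.
  by rewrite -mulr_natr /barrier_coef natr_pred; field; rewrite gt_eqF.
by rewrite pmulr_rlt0.
Qed.

Lemma dirder_barrier r x : dotv x nu = 0 -> dirder (barrier r) nu x = 2 * r.
Proof. by move=> x_nu0; rewrite /barrier dirder_qbarrier /qbarrier_grad x_nu0 nu1; ring. Qed.

Lemma barrier_ge r x : 0 <= r -> slab nu x -> r * dotv x x <= barrier r x.
Proof.
move=> r_ge0 /andP[t1 t2]; have K2 := barrier_coef_ge2.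
have : 0 <= barrier_coef * (1 - dotv x nu ^+ 2) + 2 * (1 + dotv x nu).
  by rewrite addr_ge0 ?mulr_ge0 //; nra.
move=> /(mulr_ge0 r_ge0); rewrite /barrier /qbarrier; nra.
Qed.

Lemma barrier_le r x : 0 <= r -> slab nu x -> enorm (tang nu x) <= 1 ->
  barrier r x <= (barrier_coef + 4) * r.
Proof.
move=> r_ge0 /andP[t1 t2] e1; have K2 := barrier_coef_ge2.
have := sqr_enorm_tang x nu1; have := enorm_ge0 (tang nu x).
move: (enorm _) e1 => e e1 e_ge0 eE.
have e2 : e ^+ 2 <= 1 by nra.
have t2' : dotv x nu ^+ 2 <= 1 by nra.
have d2 : dotv x x <= 2 by lra.
have := mulr_ge0 (mulr_ge0 (le_trans (ler0n _ 2) K2) r_ge0) (sqr_ge0 (dotv x nu)).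
rewrite /barrier /qbarrier; nra.
Qed.

End Barrier.

Theorem corollary2p10 (R : realType) (n : nat) (lam Lam : R) :
  0 < lam -> lam < Lam ->
  exists C : R, 0 < C /\
    forall (nu : 'rV[R]_n) (Rr eps : R) (w : 'rV[R]_n -> R),
      dotv nu nu = 1 -> 0 < Rr -> 1 <= Rr -> 0 < eps ->
      {within SigmaR nu Rr, continuous w} ->
      visc_sub_Pplus lam Lam nu Rr w ->
      visc_super_Pminus lam Lam nu Rr w ->
      (forall x, SigmaR nu Rr x -> dotv x nu = -1 -> w x = 0) ->
      (forall x, SigmaR nu Rr x -> `|w x| <= Rr `^ (2 - eps)) ->
      forall x, slab nu x -> enorm (tang nu x) <= 1 ->
        `|w x| <= C * Rr `^ (- eps).
Proof.
move=> lam_gt0 lam_lt_Lam; have Lam_ge0 : 0 <= Lam by rewrite ltW // (lt_trans lam_gt0).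
have K2 := barrier_coef_ge2 n lam_gt0 Lam_ge0.
exists (barrier_coef n lam Lam + 4); split; first lra.
move=> nu Rr eps w nu1 Rr_gt0 Rr_ge1 eps_gt0 wC wsub wsup wD w_le x x_slab x_tang.
set r := Rr `^ (- eps); have r_gt0 : 0 < r by rewrite powR_gt0.
set psi := barrier lam Lam nu.
have psi_ge y : SigmaR nu Rr y -> r * dotv y y <= psi r y.
  by case=> y_slab _; apply: barrier_ge => //; exact: ltW.
have w_bdry y : SigmaR nu Rr y -> dotv y nu = -1 \/ enorm (tang nu y) = Rr ->
    `|w y| <= psi r y.
  move=> Sy [y_D|y_L]; apply: le_trans (psi_ge y Sy).
    by rewrite wD // normr0 mulr_ge0 ?dotv_ge0 // ltW.
  have Rr_pow : Rr `^ (2 - eps) = Rr ^+ 2 * r.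
    by rewrite powRD ?(gt_eqF Rr_gt0) ?implybT // powR_mulrn // ltW.
  apply: le_trans (w_le y Sy) _; rewrite Rr_pow mulrC ler_pM2l // -y_L.
  by rewrite sqr_enorm_tang // gerBl sqr_ge0.
have Sx : SigmaR nu Rr x by split => //; exact: le_trans x_tang Rr_ge1.
have w_up : w x <= psi r x.
  apply: (visc_sub_le_strict_super nu1 wC (C2_barrier _ _ _ _) wsub _ _ _ Sx)
    => [y _|y [y_N _]|y Sy /(w_bdry y Sy)].
  - by rewrite pucci_plus_hessian_barrier // oppr_lt0 !mulr_gt0 ?addr_gt0 //; lra.
  - by rewrite dirder_barrier // mulr_gt0.
  - exact: le_trans (ler_norm _).
have w_lo : psi (- r) x <= w x.
  apply: (visc_super_ge_strict_sub nu1 wC (C2_barrier _ _ _ _) wsup _ _ _ Sx)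
    => [y _|y [y_N _]|y Sy /(w_bdry y Sy)].
  - rewrite pucci_minus_hessian_barrier ?oppr_lt0 // mulrN mulNr opprK.
    by rewrite !mulr_gt0 ?addr_gt0 //; lra.
  - by rewrite dirder_barrier // mulrN oppr_lt0 mulr_gt0.
  - by rewrite /psi barrierN => /ler_normlP[]; lra.
have := barrier_le lam_gt0 Lam_ge0 nu1 (ltW r_gt0) x_slab x_tang.
rewrite /psi in w_up w_lo; rewrite barrierN in w_lo; rewrite ler_norml => psi_x_le.
by apply/andP; split; lra.
Qed.
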